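(* Let $F=f+\mu c$ with $\mu>0$, $f:\mathbb{R}^n\to\mathbb{R}$ convex and continuously differentiable with $L$-Lipschitz gradient, and $c:\mathbb{R}^n\to\mathbb{R}$ convex. Let $0<\tau_{\min}\le\tau_k\le\tau_{\max}<\infty$, let $d_k=\mathscr{P}_c(x_k-\tau_k\nabla f(x_k),\mu\tau_k)-x_k\neq0$, and let $\alpha_k\in(0,1]$ satisfy, with some $\theta>0$, both $\nu(\alpha_k)|1-\lambda(\alpha_k)|\ge\theta$ and $F_{k+1}-R_k\ge-\frac{\alpha_k^2}{2}L\|d_k\|^2+\alpha_k\Delta_k$, where $x_{k+1}=x_k+\alpha_kd_k$. Then $$\frac{F_k-F_{k+1}}{\|d_k\|^2}\ \ge\ \frac{\theta}{2L\tau_{\max}^2}>0 .$$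
   Context: Notation: $h_k=h(x_k)$, $\nabla h_k=\nabla h(x_k)$; $\mathscr{P}_c(x,\vartheta)=\operatorname{argmin}_y\{\vartheta c(y)+\frac12\|x-y\|^2\}$. $\Delta_k=d_k^T\nabla f_k+\mu(c(x_k+d_k)-c_k)$. Reference value: for an integer $N>0$, $m(0)=0$, $0\le m(k)\le\min\{m(k-1)+1,N-1\}$, $F_{l(k)}=\max_{0\le j\le m(k)}F_{k-j}$, and $R_k=\eta_kF_{l(k)}+(1-\eta_k)F_k$ with $\eta_k\in[0,1]$. Quotients: $\nu(\alpha_k)=\frac{F_{k+1}-F_k}{\alpha_k\Delta_k}$, $\lambda(\alpha_k)=\frac{F_{k+1}-R_k}{\alpha_k\Delta_k}$. *)

From HB Require Import structures.
From mathcomp Require Import all_boot all_order all_algebra.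
From mathcomp Require Import all_classical all_reals all_analysis.
Set Implicit Arguments. Unset Strict Implicit. Unset Printing Implicit Defensive.
Import Order.TTheory GRing.Theory Num.Theory.
Import numFieldNormedType.Exports.
Local Open Scope ring_scope.

Definition dotv (R : realType) (n : nat) (u v : 'rV[R]_n) : R :=
  \sum_(i < n) u 0 i * v 0 i.
Definition enorm (R : realType) (n : nat) (u : 'rV[R]_n) : R :=
  Num.sqrt (dotv u u).

Definition convex_fun (R : realType) (n : nat) (g : 'rV[R]_n -> R) : Prop :=
  forall (x y : 'rV[R]_n) (t : R), 0 <= t -> t <= 1 ->
    g (t *: x + (1 - t) *: y) <= t * g x + (1 - t) * g y.

Definition is_gradient (R : realType) (n : nat)
    (f : 'rV[R]_n -> R) (gradf : 'rV[R]_n -> 'rV[R]_n) : Prop :=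
  forall x : 'rV[R]_n, differentiable f x /\ forall h, 'd f x h = dotv (gradf x) h.

Definition lipschitz_with (R : realType) (n : nat)
    (g : 'rV[R]_n -> 'rV[R]_n) (L : R) : Prop :=
  forall x y : 'rV[R]_n, enorm (g x - g y) <= L * enorm (x - y).

(* p is (the) minimizer of  y |-> th * c y + 1/2 ||x - y||^2,
   i.e. p = P_c(x, th)  (the argmin is unique for convex c, th > 0). *)
Definition is_prox (R : realType) (n : nat) (c : 'rV[R]_n -> R)
    (x : 'rV[R]_n) (th : R) (p : 'rV[R]_n) : Prop :=
  forall y : 'rV[R]_n,
    th * c p + 2^-1 * (enorm (x - p)) ^+ 2 <= th * c y + 2^-1 * (enorm (x - y)) ^+ 2.

Definition Fmaxref (R : realType) (Fs : nat -> R) (m : nat -> nat) (k : nat) : R :=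
  \big[Num.max/Fs k]_(j < (m k).+1) Fs (k - j)%N.

From HB Require Import structures.
From mathcomp Require Import all_boot all_order all_algebra.
From mathcomp Require Import all_classical all_reals all_analysis.
From mathcomp Require Import ring lra.
Set Implicit Arguments. Unset Strict Implicit. Unset Printing Implicit Defensive.
Import Order.TTheory GRing.Theory Num.Theory.
Import numFieldNormedType.Exports.
Local Open Scope ring_scope.
Local Open Scope classical_set_scope.

(* Testing the prox inequality along the segment from [x_k] to [x_k + d_k]
   gives [tau_k Delta_k <= - |d_k|^2], so [Delta_k < 0].  Convexity of [f] and
   the Lipschitz gradient give [F_k+1 - F_k <= alpha_k Delta_k + L alpha_k^2 |d_k|^2];
   together with [F_k <= R_k] and the assumed lower bound on [F_k+1 - R_k] this
   yields [|1 - lambda| alpha_k |Delta_k| <= L alpha_k^2 |d_k|^2].  Multiplying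
   by [nu = (F_k - F_k+1) / (alpha_k |Delta_k|)] gives
   [theta Delta_k^2 <= L |d_k|^2 (F_k - F_k+1)], and [|d_k|^2 <= tau_max |Delta_k|]
   concludes, even with [L tau_max^2] in place of [2 L tau_max^2]. *)

Section InnerProduct.
Variables (R : realType) (n : nat).
Implicit Types (u v w : 'rV[R]_n) (a b : R).

Lemma dotvC u v : dotv u v = dotv v u.
Proof. by apply: eq_bigr => i _; rewrite mulrC. Qed.

Lemma dotvDl u v w : dotv (u + v) w = dotv u w + dotv v w.
Proof. by rewrite /dotv -big_split; apply: eq_bigr => i _; rewrite !mxE mulrDl. Qed.

Lemma dotvZl a u w : dotv (a *: u) w = a * dotv u w.
Proof. by rewrite /dotv mulr_sumr; apply: eq_bigr => i _; rewrite !mxE mulrA. Qed.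

Lemma dotvDr u v w : dotv w (u + v) = dotv w u + dotv w v.
Proof. by rewrite dotvC dotvDl !(dotvC w). Qed.

Lemma dotvZr a u w : dotv w (a *: u) = a * dotv w u.
Proof. by rewrite dotvC dotvZl dotvC. Qed.

Lemma dotvBl u v w : dotv (u - v) w = dotv u w - dotv v w.
Proof. by rewrite -scaleN1r dotvDl dotvZl mulN1r. Qed.

Lemma dotv_ge0 u : 0 <= dotv u u.
Proof. by apply: sumr_ge0 => i _; rewrite -expr2 sqr_ge0. Qed.

Lemma dotv_gt0 u : u != 0 -> 0 < dotv u u.
Proof.
move=> u_neq0; rewrite lt_def dotv_ge0 andbT; apply: contra u_neq0 => /eqP uu0.
apply/eqP/matrixP => i j; rewrite (ord1 i) mxE.
have /psumr_eq0P uj0 := uu0; move/eqP: (uj0 (fun i _ => sqr_ge0 (u 0 i)) j isT).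
by rewrite mulf_eq0 orbb => /eqP.
Qed.

Lemma enorm_ge0 u : 0 <= enorm u.
Proof. exact: sqrtr_ge0. Qed.

Lemma enorm_sqr u : enorm u ^+ 2 = dotv u u.
Proof. by rewrite /enorm sqr_sqrtr // dotv_ge0. Qed.

Lemma dotv_lincomb_sqr a b u v : dotv (a *: u + b *: v) (a *: u + b *: v) =
  a ^+ 2 * dotv u u + 2 * a * b * dotv u v + b ^+ 2 * dotv v v.
Proof. by rewrite !dotvDl !dotvDr !dotvZl !dotvZr (dotvC v u); ring. Qed.

Lemma dotv_le_of_enorm_le (L : R) w v : 0 < L ->
  enorm w <= L * enorm v -> dotv w v <= L * dotv v v.
Proof.
move=> L_gt0 wLv.
have ww : dotv w w <= L ^+ 2 * dotv v v.
  rewrite -!enorm_sqr -exprMn; apply: lerXn2r; rewrite ?nnegrE ?enorm_ge0 //.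
  by rewrite mulr_ge0 ?enorm_ge0 ?ltW.
(* expand [0 <= |w - L v|^2] *)
by have := dotv_ge0 (1 *: w + (- L) *: v); rewrite dotv_lincomb_sqr; nra.
Qed.

End InnerProduct.

Section ConvexDescent.
Variables (R : realType) (n : nat).
Implicit Types (x y z d v : 'rV[R]_n) (a : R).

Lemma convex_fun_segment (c : 'rV[R]_n -> R) x d a : convex_fun c -> 0 <= a <= 1 ->
  c (x + a *: d) <= c x + a * (c (x + d) - c x).
Proof.
move=> c_cvx /andP[a_ge0 a_le1].
have -> : x + a *: d = a *: (x + d) + (1 - a) *: x.
  by apply/matrixP => i j; rewrite !mxE; ring.
by have := c_cvx (x + d) x a a_ge0 a_le1; lra.
Qed.

Lemma convex_gradient_le (f : 'rV[R]_n -> R) g : convex_fun f -> is_gradient f g ->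
  forall y z, f y + dotv (g y) (z - y) <= f z.
Proof.
move=> f_cvx f_grad y z; set v := z - y; have [dfy dfE] := f_grad y.
have hd : derivable f y v := @diff_derivable _ _ _ f y v dfy.
rewrite -dfE -deriveE //.
have H : (fun h => h^-1 *: ((f \o shift y) (h *: v) - f y)) @ 0^'+ --> 'D_v f y.
  move=> A /hd /nbhs_ballP [_ /posnumP[e] xe_A].
  by exists e%:num => //= t xe_t /gt_eqF/negbT/xe_A; exact.
suff : 'D_v f y <= f z - f y by lra.
apply: (cvgr_to_le H); near=> h.
have h0 : 0 < h by near: h; exact: nbhs_right_gt.
have h1 : h < 1 by near: h; exact: nbhs_right_lt.
rewrite /= -[h^-1 *: _]/(h^-1 * _).
have -> : h *: v + y = h *: z + (1 - h) *: y.
  by rewrite /v scalerBr scalerBl scale1r [RHS]addrA addrAC.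
have := f_cvx z y h (ltW h0) (ltW h1).
rewrite ler_pdivrMl // => Hc.
lra.
Unshelve. all: by end_near.
Qed.

Lemma lipschitz_gradient_descent (f : 'rV[R]_n -> R) g (L : R) x v :
  convex_fun f -> is_gradient f g -> lipschitz_with g L -> 0 < L ->
  f (x + v) <= f x + dotv (g x) v + L * dotv v v.
Proof.
move=> f_cvx f_grad g_lip L_gt0.
have := convex_gradient_le f_cvx f_grad (x + v) x.
rewrite opprD addNKr -scaleN1r dotvZr => f_le.
have : dotv (g (x + v) - g x) v <= L * dotv v v.
  apply: dotv_le_of_enorm_le => //.
  by have := g_lip (x + v) x; rewrite addrAC subrr add0r.
rewrite dotvBl; lra.
Qed.

End ConvexDescent.

Lemma le0_of_forall_le_mul (R : realFieldType) (a b : R) :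
  (forall t, 0 < t <= 1 -> a <= t * b) -> a <= 0.
Proof.
move=> small; rewrite leNgt; apply/negP => a_gt0.
have a_le_b : a <= b by rewrite -[b]mul1r; apply: small; rewrite ltr01 lexx.
have b_gt0 : 0 < b := lt_le_trans a_gt0 a_le_b.
have t01 : 0 < a / (2 * b) <= 1.
  by rewrite divr_gt0 ?mulr_gt0 //= ler_pdivrMr ?mulr_gt0 // mul1r; lra.
have := small _ t01.
have -> : a / (2 * b) * b = a / 2 by field; rewrite gt_eqF.
lra.
Qed.

Section ProxGradientStep.
Variables (R : realType) (n : nat).
Implicit Types (x g d : 'rV[R]_n) (tau mu a : R).

(* Test the prox inequality against the points [x + (1 - t) d] of the segment
   from [x] to [x + d], and let [t] tend to [0]. *)
Lemma prox_descent (c : 'rV[R]_n -> R) x g d tau mu :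
  convex_fun c -> 0 <= tau -> 0 <= mu ->
  is_prox c (x - tau *: g) (mu * tau) (x + d) ->
  tau * (dotv d g + mu * (c (x + d) - c x)) + dotv d d <= 0.
Proof.
move=> c_cvx tau_ge0 mu_ge0 prox.
have dist2 s : enorm (x - tau *: g - (x + s *: d)) ^+ 2 =
    tau ^+ 2 * dotv g g + 2 * tau * s * dotv g d + s ^+ 2 * dotv d d.
  have -> : x - tau *: g - (x + s *: d) = (- tau) *: g + (- s) *: d.
    by apply/matrixP => i j; rewrite !mxE; ring.
  by rewrite enorm_sqr dotv_lincomb_sqr; ring.
rewrite (dotvC d g); apply: (@le0_of_forall_le_mul _ _ (dotv d d / 2)).
move=> t /andP[t_gt0 t_le1].
have := prox (x + (1 - t) *: d); rewrite -{1 2}[d]scale1r !dist2 scale1r => prox_t.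
have t01 : 0 <= 1 - t <= 1 by apply/andP; split; lra.
have c_seg := ler_wpM2l (mulr_ge0 mu_ge0 tau_ge0) (convex_fun_segment x d c_cvx t01).
set A := _ + dotv d d; have : t * (A - t * (dotv d d / 2)) <= 0 by rewrite /A; lra.
by rewrite pmulr_rle0 // subr_le0.
Qed.

Lemma composite_step_le (f c : 'rV[R]_n -> R) (g : 'rV[R]_n -> 'rV[R]_n) (L : R) mu x d a :
  convex_fun f -> is_gradient f g -> lipschitz_with g L -> 0 < L ->
  convex_fun c -> 0 <= mu -> 0 <= a <= 1 ->
  f (x + a *: d) + mu * c (x + a *: d) - (f x + mu * c x)
    <= a * (dotv d (g x) + mu * (c (x + d) - c x)) + L * a ^+ 2 * dotv d d.
Proof.
move=> f_cvx f_grad g_lip L_gt0 c_cvx mu_ge0 a01.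
have := lipschitz_gradient_descent x (a *: d) f_cvx f_grad g_lip L_gt0.
rewrite dotvZr dotvZl dotvZr (dotvC d) => f_step.
have := ler_wpM2l mu_ge0 (convex_fun_segment x d c_cvx a01).
lra.
Qed.

End ProxGradientStep.

Lemma Fmaxref_ge (R : realType) (Fs : nat -> R) (m : nat -> nat) (k : nat) :
  Fs k <= Fmaxref Fs m k.
Proof. by rewrite /Fmaxref; elim/big_rec: _ => // i y _ le_y; rewrite le_max le_y orbT. Qed.

Section RatioTest.
Variable R : realFieldType.

Lemma ratio_test_sqr_le (a D q L th Fk Fk1 Rk : R) :
  0 < a -> 0 <= L -> 0 <= q -> D < 0 -> 0 < th -> Fk <= Rk ->
  Fk1 - Fk <= a * D + L * a ^+ 2 * q ->
  - (a ^+ 2 / 2) * L * q + a * D <= Fk1 - Rk ->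
  th <= (Fk1 - Fk) / (a * D) * `|1 - (Fk1 - Rk) / (a * D)| ->
  th * D ^+ 2 <= L * q * (Fk - Fk1).
Proof.
move=> a_gt0 L_ge0 q_ge0 D_lt0 th_gt0 ref descent lower ratio.
have aD_neq0 : a * D != 0 by rewrite mulf_eq0 negb_or gt_eqF // lt_eqF.
set B := - (a * D); set u := Fk - Fk1; set r := Rk - Fk1.
have B_gt0 : 0 < B by rewrite oppr_gt0 pmulr_rlt0.
have nu_eq : (Fk1 - Fk) / (a * D) = u / B.
  by rewrite /u /B invrN mulrN -mulNr opprB.
have lam_eq : 1 - (Fk1 - Rk) / (a * D) = (B - r) / B.
  by rewrite /r /B; field; rewrite lt_eqF // gt_eqF.
rewrite nu_eq lam_eq normrM normfV (gtr0_norm B_gt0) in ratio.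
have thB : th * B ^+ 2 <= u * `|B - r|.
  have -> : u * `|B - r| = (u / B * (`|B - r| / B)) * B ^+ 2.
    by field; rewrite gt_eqF.
  by rewrite ler_pM2r // exprn_gt0.
have La2q : 0 <= L * a ^+ 2 * q by rewrite mulr_ge0 // mulr_ge0 // sqr_ge0.
have Br_le : `|B - r| <= L * a ^+ 2 * q.
  by rewrite ler_norml /B /r; apply/andP; split; lra.
have u_ge0 : 0 <= u.
  rewrite leNgt; apply/negP => u_lt0.
  have : u * `|B - r| <= 0 by rewrite nmulr_rle0 ?normr_ge0.
  have : 0 < th * B ^+ 2 by rewrite mulr_gt0 // exprn_gt0.
  lra.
have : a ^+ 2 * (th * D ^+ 2) <= a ^+ 2 * (L * q * u).
  have -> : a ^+ 2 * (th * D ^+ 2) = th * B ^+ 2 by rewrite /B sqrrN exprMn; ring.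
  by have := ler_wpM2l u_ge0 Br_le; lra.
by rewrite ler_pM2l // exprn_gt0.
Qed.

Lemma ratio_lower_bound (q D tm L th u : R) :
  0 < q -> 0 < L -> 0 <= th -> q <= tm * - D ->
  th * D ^+ 2 <= L * q * u -> th / (L * tm ^+ 2) <= u / q.
Proof.
move=> q_gt0 L_gt0 th_ge0 q_le key.
have q2_le : q ^+ 2 <= tm ^+ 2 * D ^+ 2.
  have : q ^+ 2 <= (tm * - D) ^+ 2.
    by apply: lerXn2r; rewrite ?nnegrE //; lra.
  by rewrite exprMn sqrrN.
have tm2_gt0 : 0 < tm ^+ 2.
  by rewrite lt_def sqrf_eq0 sqr_ge0 andbT; apply: contraTneq q_le => ->; lra.
have : q * (th * q) <= q * (tm ^+ 2 * L * u).
  have := ler_wpM2l th_ge0 q2_le; have := ler_wpM2l (ltW tm2_gt0) key.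
  rewrite !expr2; lra.
rewrite ler_pM2l // => thq.
have Ltm2_gt0 : 0 < L * tm ^+ 2 by rewrite mulr_gt0.
by rewrite ler_pdivlMr // mulrAC ler_pdivrMr //; lra.
Qed.

End RatioTest.

Theorem mainTheorem4 (R : realType) (n : nat)
  (f c : 'rV[R]_n -> R) (gradf : 'rV[R]_n -> 'rV[R]_n) (mu L : R)
  (x : nat -> 'rV[R]_n) (tau alpha eta : nat -> R) (m : nat -> nat) (N : nat)
  (tau_min tau_max theta : R) (d : nat -> 'rV[R]_n) (k : nat) :
  0 < mu ->
  convex_fun f -> is_gradient f gradf -> continuous gradf ->
  0 < L -> lipschitz_with gradf L ->
  convex_fun c ->
  (0 < N)%N -> m 0%N = 0%N ->
  (forall j, m j.+1 <= minn (m j).+1 (N.-1))%N ->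
  (forall j, 0 <= eta j <= 1) ->
  0 < tau_min -> (forall j, tau_min <= tau j <= tau_max) ->
  is_prox c (x k - tau k *: gradf (x k)) (mu * tau k) (x k + d k) ->
  d k != 0 ->
  0 < alpha k <= 1 ->
  x k.+1 = x k + alpha k *: d k ->
  0 < theta ->
  let F := fun z => f z + mu * c z in
  let Fs := fun j => F (x j) in
  let R_k := eta k * Fmaxref Fs m k + (1 - eta k) * Fs k in
  let Delta := dotv (d k) (gradf (x k)) + mu * (c (x k + d k) - c (x k)) in
  let nu := (Fs k.+1 - Fs k) / (alpha k * Delta) in
  let lam := (Fs k.+1 - R_k) / (alpha k * Delta) in
  nu * `|1 - lam| >= theta ->
  Fs k.+1 - R_k >= - (alpha k ^+ 2 / 2) * L * enorm (d k) ^+ 2 + alpha k * Delta ->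
  (Fs k - Fs k.+1) / enorm (d k) ^+ 2 >= theta / (2 * L * tau_max ^+ 2)
  /\ theta / (2 * L * tau_max ^+ 2) > 0.
Proof.
move=> mu_gt0 f_cvx f_grad _ L_gt0 g_lip c_cvx _ _ _ eta01 tau_min_gt0 tau_bnd prox
  d_neq0 /andP[a_gt0 a_le1] x_next theta_gt0 F Fs R_k Delta nu lam ratio lower.
have /andP[tau_min_le tau_le] := tau_bnd k.
have tau_gt0 : 0 < tau k := lt_le_trans tau_min_gt0 tau_min_le.
have q_gt0 := dotv_gt0 d_neq0.
have descent := prox_descent c_cvx (ltW tau_gt0) (ltW mu_gt0) prox.
rewrite -/Delta in descent.
have Delta_lt0 : Delta < 0.
  have : tau k * Delta < 0 by lra.
  by rewrite pmulr_rlt0.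
have step : Fs k.+1 - Fs k <= alpha k * Delta + L * alpha k ^+ 2 * dotv (d k) (d k).
  by rewrite /Fs /F x_next; apply: composite_step_le => //; [exact: ltW | rewrite ltW].
have ref : Fs k <= R_k.
  have /andP[eta_ge0 eta_le1] := eta01 k.
  by have := Fmaxref_ge Fs m k; rewrite /R_k; nra.
have tau_max_bnd : dotv (d k) (d k) <= tau_max * - Delta.
  have : tau k * - Delta <= tau_max * - Delta by rewrite ler_wpM2r // oppr_ge0 ltW.
  lra.
have tau_max_gt0 : 0 < tau_max := lt_le_trans tau_gt0 tau_le.
have denom_gt0 : 0 < L * tau_max ^+ 2 by rewrite mulr_gt0 // exprn_gt0.
rewrite enorm_sqr in lower *; split; last by rewrite divr_gt0 // -mulrA mulr_gt0.
apply: le_trans (ratio_lower_bound q_gt0 L_gt0 (ltW theta_gt0) tau_max_bnd _); last first.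
  exact: ratio_test_sqr_le (ltW L_gt0) (ltW q_gt0) Delta_lt0 theta_gt0 ref step lower ratio.
have -> : theta / (2 * L * tau_max ^+ 2) = theta / (L * tau_max ^+ 2) / 2.
  by field; rewrite !gt_eqF.
by have := divr_gt0 theta_gt0 denom_gt0; lra.
Qed.
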